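(* Let $G$ be a graph with at least one cut-vertex. Let $\beta$ be the number of vertices of a largest block of $G$ and $\tilde{\Delta}$ the maximum degree of a cut-vertex of $G$ in its block-cutpoint graph. Then $\Gamma(G)\le(\beta-1)\tilde{\Delta}+1$.
   Context: A Grundy-coloring of $G$ is a proper coloring with nonempty color classes $C_1,\ldots,C_k$ such that for $i<j$ each vertex of $C_j$ has a neighbor in $C_i$; $\Gamma(G)$ is the maximum number of colors of a Grundy-coloring. A cut-vertex is a vertex whose removal increases the number of connected components. A block is a maximal 2-connected subgraph or a bridge (as a $K_2$). The block-cutpoint graph is the bipartite graph whose parts are the cut-vertices and the blocks of $G$, a cut-vertex $v$ being adjacent to a block $B$ iff $v\in B$. *)

(* A finite simple graph is a symmetric irreflexive relation
   e on a finite type T of vertices. *)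
From mathcomp Require Import all_boot.
Set Implicit Arguments. Unset Strict Implicit. Unset Printing Implicit Defensive.

Section Graph.
Variables (T : finType) (e : rel T).

Definition erest (S : {set T}) : rel T :=
  fun x y => [&& x \in S, y \in S & e x y].

Definition components (S : {set T}) : {set {set T}} :=
  [set [set y in S | connect (erest S) x y] | x in S].

Definition ncomp (S : {set T}) : nat := #|components S|.

Definition cut_vertex (v : T) : bool :=
  ncomp [set: T] < ncomp ([set: T] :\ v).

(* the induced subgraph on B has at least 2 vertices, is connected and has no
   cut-vertex: for #|B| >= 3 this is 2-connectivity, for #|B| = 2 it is K2 *)
Definition nonsep (B : {set T}) : bool :=
  [&& 2 <= #|B|, ncomp B == 1 & [forall v in B, ncomp (B :\ v) <= ncomp B]].

(* blocks: maximal 2-connected (induced) subgraphs or bridges (as K2),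
   represented by their vertex sets *)
Definition is_block (B : {set T}) : bool :=
  nonsep B && [forall B' : {set T}, (B \proper B') ==> ~~ nonsep B'].

Definition beta : nat := \max_(B : {set T} | is_block B) #|B|.

(* degree of a cut-vertex v in the block-cutpoint graph = number of blocks
   containing v *)
Definition bc_degree (v : T) : nat := #|[set B : {set T} | is_block B & v \in B]|.

Definition Delta_tilde : nat := \max_(v | cut_vertex v) bc_degree v.

Definition grundy_coloring (k : nat) (c : {ffun T -> 'I_#|T|.+1}) : bool :=
  [&& [forall v, (1 <= c v) && (c v <= k)],
      [forall i : 'I_#|T|.+1, (1 <= i <= k) ==> [exists v, c v == i]],
      [forall u, forall v, e u v ==> (c u != c v)] &
      [forall v, forall i : 'I_#|T|.+1,
         (1 <= i) && (i < c v) ==> [exists u, e v u && (c u == i)]]].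

(* Grundy number: maximum number of colors of a Grundy coloring
   (a Grundy coloring has at most #|T| colors since its classes are nonempty
   and disjoint) *)
Definition grundy_number : nat :=
  \max_(k < #|T|.+1 | [exists c : {ffun T -> 'I_#|T|.+1}, grundy_coloring k c]) k.

End Graph.

(* In a Grundy colouring with k colours, a vertex of colour k has neighbours of
   all k - 1 smaller colours, so it suffices to bound every degree by
   (beta - 1) * Delta_tilde.  Every edge lies in a block, so the neighbours of a
   cut-vertex v lie in the at most Delta_tilde blocks through v, each
   contributing at most beta - 1 of them.  A vertex v that is not a cut-vertex
   lies in a single block: were vw an edge leaving a block B through v, a path
   from w back to B in G - v would close an ear of B, and B together with that
   ear would be a larger 2-connected subgraph.  So v has at most beta - 1
   neighbours, and Delta_tilde >= 1 because a cut-vertex is not isolated. *)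

From mathcomp Require Import all_boot zify.
Set Implicit Arguments. Unset Strict Implicit. Unset Printing Implicit Defensive.

Lemma card_bigcup_le (T I : finType) (P : {pred I}) (F : I -> {set T}) :
  #|\bigcup_(i in P) F i| <= \sum_(i in P) #|F i|.
Proof.
elim/big_rec2: _ => [|i n U _ leUn]; first by rewrite cards0.
by apply: leq_trans (leq_card_setU _ _).1 _; rewrite leq_add2l.
Qed.

Section BlockDegrees.
Variables (T : finType) (e : rel T).
Hypotheses (e_sym : symmetric e) (e_irr : irreflexive e).
Implicit Types (S B : {set T}) (u v w x y z : T).

Definition component S x := [set y in S | connect (erest e S) x y].

Definition connected S := forall x y, x \in S -> y \in S -> connect (erest e S) x y.

Definition saturation S (C : {set T}) :=
  [set y in S | [exists x in C, connect (erest e S) x y]].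

Definition neighbors v := [set u | e v u].

Lemma componentsE S : components e S = [set component S x | x in S].
Proof. by []. Qed.

Lemma erest_sym S : symmetric (erest e S).
Proof. by move=> x y; rewrite /erest e_sym andbCA. Qed.

Lemma connect_erest_sym S x y : connect (erest e S) x y = connect (erest e S) y x.
Proof. exact: (sym_connect_sym (erest_sym S)). Qed.

Lemma connect_erest_sub S S' x y :
  S \subset S' -> connect (erest e S) x y -> connect (erest e S') x y.
Proof.
move=> /subsetP sSS'; apply: connect_sub => a b /and3P[aS bS eab].
by apply: connect1; rewrite /erest eab !sSS'.
Qed.

Lemma path_connect_erest S x p :
  path e x p -> {subset x :: p <= S} -> connect (erest e S) x (last x p).
Proof.
elim: p x => [|y p IHp] x /=; first by rewrite connect0.
case/andP=> exy pyp sub; apply: connect_trans (IHp y pyp _); last first.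
  by move=> z zyp; apply: sub; rewrite inE zyp orbT.
by apply: connect1; rewrite /erest exy !sub ?mem_head // inE mem_head orbT.
Qed.

Lemma path_erest_sub S x p : path (erest e S) x p -> {subset p <= S}.
Proof.
elim: p x => [|y p IHp] x //= /andP[/and3P[_ yS _] pyp] z.
by rewrite inE => /predU1P[->|/(IHp y pyp)].
Qed.

Lemma mem_component S x : x \in S -> x \in component S x.
Proof. by move=> xS; rewrite inE xS connect0. Qed.

Lemma eq_component S x y : x \in S -> y \in S ->
  (component S x == component S y) = connect (erest e S) x y.
Proof.
move=> xS yS; apply/eqP/idP => [Exy|cxy].
  by have := mem_component yS; rewrite -Exy inE => /andP[].
apply/setP => z; rewrite !inE; case: (z \in S) => //=.
apply/idP/idP; last exact: connect_trans.
by apply: connect_trans; rewrite connect_erest_sym.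
Qed.

Lemma ncomp_le1P S : ncomp e S <= 1 <-> connected S.
Proof.
rewrite /ncomp componentsE; split => [/card_le1_eqP C1 x y xS yS|cS].
  by rewrite -eq_component //; apply/eqP; apply: C1; apply: imset_f.
apply/card_le1_eqP => _ _ /imsetP[x xS ->] /imsetP[y yS ->].
by apply/eqP; rewrite eq_component //; apply: cS.
Qed.

Lemma ncomp_gt0 S x : x \in S -> 0 < ncomp e S.
Proof. by move=> xS; apply/card_gt0P; exists (component S x); apply/imsetP; exists x. Qed.

Lemma connected_from S r :
  r \in S -> (forall z, z \in S -> connect (erest e S) r z) -> connected S.
Proof.
move=> rS rz x y xS yS; apply: connect_trans (rz y yS).
by rewrite connect_erest_sym; apply: rz.
Qed.

Lemma connected_card_le1 S : #|S| <= 1 -> connected S.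
Proof. by move=> /card_le1_eqP S1 x y xS yS; rewrite (S1 x y) ?connect0. Qed.

Lemma nonsepP B :
  nonsep e B <-> [/\ 2 <= #|B|, connected B & {in B, forall y, connected (B :\ y)}].
Proof.
split=> [/and3P[B2 /eqP B1 /forall_inP By]|[B2 cB cBy]].
  split=> [//||y yB]; apply/ncomp_le1P; first by rewrite B1.
  by rewrite -B1 By.
have [x xB] : exists x, x \in B by apply/card_gt0P; apply: leq_trans B2.
have B1 : ncomp e B = 1.
  by apply/eqP; rewrite eqn_leq (ncomp_gt0 xB) andbT; apply/ncomp_le1P.
apply/and3P; split; rewrite ?B1 //.
by apply/forall_inP => y yB; apply/ncomp_le1P; apply: cBy.
Qed.

Lemma nonsep_connectedD1 B : nonsep e B -> forall y, connected (B :\ y).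
Proof.
case/nonsepP=> _ cB cBy y; have [/cBy //|yB] := boolP (y \in B).
by have -> : B :\ y = B by apply/setDidPl; rewrite disjoint_sym disjoints1.
Qed.

Lemma nonsep_edge u v : e u v -> nonsep e [set u; v].
Proof.
move=> euv; have uv : u != v by apply: contraTneq euv => ->; rewrite e_irr.
apply/nonsepP; split; first by rewrite cards2 uv.
  apply: (connected_from (r := u)) => [|z]; first by rewrite !inE eqxx.
  by rewrite !inE => /orP[]/eqP->; rewrite ?connect0 // connect1 // /erest !inE !eqxx orbT.
move=> y yuv; apply: connected_card_le1.
by move: (cardsD1 y [set u; v]); rewrite cards2 uv yuv; lia.
Qed.

Lemma nonsep_sub_block A : nonsep e A -> exists2 B, is_block e B & A \subset B.
Proof.
move=> nA; pose P := [pred B : {set T} | nonsep e B && (A \subset B)].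
have PA : P A by rewrite /= nA subxx.
case: (arg_maxnP (fun B => #|B|) PA) => B /andP[nB AB] maxB.
exists B => //; rewrite /is_block nB; apply/forallP => B'; apply/implyP => ltBB'.
apply: contraTN (proper_card ltBB') => nB'; rewrite -leqNgt; apply: maxB.
by rewrite /= nB' (subset_trans AB (proper_sub ltBB')).
Qed.

Lemma saturation_component S S' z :
  S' \subset S -> z \in S' -> saturation S (component S' z) = component S z.
Proof.
move=> sS'S zS'; apply/setP => y; rewrite !inE; case: (y \in S) => //=.
apply/existsP/idP => [[x /andP[]]|czy]; last by exists z; rewrite mem_component.
rewrite inE => /andP[_ czx]; apply: connect_trans.
exact: connect_erest_sub czx.
Qed.

Lemma saturation_components S S' :
  S' \subset S -> saturation S @: components e S' \subset components e S.
Proof.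
move=> sS'S; apply/subsetP => _ /imsetP[_ /imsetP[z zS' ->] ->].
by rewrite saturation_component // componentsE imset_f // (subsetP sS'S).
Qed.

(* If a and b were separated in G - v, the surjection [saturation [set: T]] from
   the components of G - v onto those of G would identify their components. *)
Lemma noncut_connect v a b : ~~ cut_vertex e v -> a != v -> b != v ->
  connect (erest e [set: T]) v a -> connect (erest e [set: T]) v b ->
  connect (erest e ([set: T] :\ v)) a b.
Proof.
move=> ncut av bv cva cvb; apply: contraNT ncut => nab.
set Tv := [set: T] :\ v; have sTv : Tv \subset [set: T] := subsetT Tv.
have aTv : a \in Tv by rewrite !inE av.
have bTv : b \in Tv by rewrite !inE bv.
have compTa : component [set: T] a = component [set: T] v.
  by apply/eqP; rewrite eq_component ?inE // connect_erest_sym.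
have compTb : component [set: T] b = component [set: T] v.
  by apply/eqP; rewrite eq_component ?inE // connect_erest_sym.
have onto : saturation [set: T] @: components e Tv = components e [set: T].
  apply/eqP; rewrite eqEsubset saturation_components //=.
  rewrite [components e _]componentsE; apply/subsetP => _ /imsetP[z _ ->].
  have [x xTv <-] : exists2 x, x \in Tv & component [set: T] x = component [set: T] z.
    by have [->|zv] := eqVneq z v; [exists a | exists z; rewrite // !inE zv].
  by rewrite -(saturation_component sTv xTv) imset_f // componentsE imset_f.
rewrite /cut_vertex /ncomp -onto ltn_neqAle leq_imset_card andbT.
apply: contra nab => /imset_injP inj; rewrite -eq_component //; apply/eqP/inj.
- exact: imset_f.
- exact: imset_f.
by rewrite !saturation_component // compTa compTb.
Qed.

Lemma cut_vertex_neighbor v : cut_vertex e v -> exists u, e v u.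
Proof.
move=> cutv; apply/existsP; move: cutv; apply: contraTT => /existsPn iso.
set Tv := [set: T] :\ v; have sTv : Tv \subset [set: T] := subsetT Tv.
have connect_Tv x y : connect (erest e [set: T]) x y -> connect (erest e Tv) x y.
  apply: connect_sub => {}x {}y /and3P[_ _ exy]; apply: connect1.
  have xv : x != v by apply: contraTneq exy => ->; apply: iso.
  have yv : y != v by apply: contraTneq exy => ->; rewrite e_sym; apply: iso.
  by rewrite /erest !inE xv yv.
rewrite /cut_vertex -leqNgt /ncomp.
have inj : {in components e Tv &, injective (saturation [set: T])}.
  move=> _ _ /imsetP[x xTv ->] /imsetP[y yTv ->].
  rewrite !saturation_component // => /eqP; rewrite eq_component ?inE // => cxy.
  by apply/eqP; rewrite eq_component //; apply: connect_Tv.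
by rewrite -(card_in_imset inj) subset_leq_card // saturation_components.
Qed.

Lemma ear_connect B v x I y z :
  v \in B -> x \in B -> path e v (rcons I x) -> uniq (v :: rcons I x) ->
  z \in I -> y != z ->
  exists2 b, b \in B :\ y & connect (erest e ((B :|: [set:: I]) :\ y)) z b.
Proof.
move=> vB xB pI uI zI yz; set S := (B :|: _) :\ y.
have inS w : w \in v :: rcons I x -> w != y -> w \in S.
  by rewrite !inE mem_rcons inE => /or3P[/eqP->|/eqP->|->] ->; rewrite ?vB ?xB ?orbT.
case/splitPr: zI inS pI uI => p1 p2; rewrite rcons_cat cat_path -cat_cons cat_uniq.
move=> inS /andP[pp1 /andP[ezp pp2]] /and3P[_ /hasPn p2p1 _].
have [yp1|yp1] := boolP (y \in v :: p1).
- have p2y w : w \in z :: rcons p2 x -> w != y.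
    by move=> wp2; apply: contraTneq yp1 => <-; apply: p2p1.
  exists x; first by rewrite !inE xB p2y // !(inE, mem_rcons) eqxx orbT.
  have := path_connect_erest (S := S) pp2; rewrite last_rcons; apply => w wp2.
  by apply: inS (p2y w wp2); rewrite mem_cat wp2 orbT.
- exists v; first by rewrite !inE vB andbT; apply: contraNneq yp1 => ->; exact: mem_head.
  rewrite connect_erest_sym.
  have := path_connect_erest (S := S) (x := v) (p := rcons p1 z); rewrite last_rcons.
  apply; first by rewrite rcons_path pp1.
  move=> w; rewrite -rcons_cons mem_rcons inE => /predU1P[->|wp1].
    by apply: inS; rewrite 1?eq_sym // mem_cat mem_head orbT.
  by apply: inS; [rewrite mem_cat wp1 | apply: contraNneq yp1 => <-].
Qed.

Lemma nonsep_ear B v x I : nonsep e B -> v \in B -> x \in B ->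
  path e v (rcons I x) -> uniq (v :: rcons I x) -> nonsep e (B :|: [set:: I]).
Proof.
move=> nB vB xB pI uI; have /nonsepP[B2 cB _] := nB.
have vI : v \notin I by case/andP: uI; rewrite mem_rcons inE negb_or => /andP[].
have sBB' y : B :\ y \subset (B :|: [set:: I]) :\ y by apply/setSD/subsetUl.
apply/nonsepP; split.
- exact: leq_trans B2 (subset_leq_card (subsetUl _ _)).
- apply: (connected_from (r := v)) => [|z]; first by rewrite inE vB.
  rewrite !inE => /orP[zB|zI]; first exact: connect_erest_sub (subsetUl _ _) (cB v z vB zB).
  have vz : v != z by apply: contraNneq vI => ->.
  have [b /setD1P[_ bB] czb] := ear_connect vB xB pI uI zI vz.
  rewrite connect_erest_sym; apply: connect_trans (connect_erest_sub (subsetDl _ _) czb) _.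
  exact: connect_erest_sub (subsetUl _ _) (cB b v bB vB).
- move=> y _; have cBy : connected (B :\ y) by apply: nonsep_connectedD1.
  have [r rBy] : exists r, r \in B :\ y by apply/card_gt0P; move: (cardsD1 y B); lia.
  apply: (connected_from (r := r)) => [|z]; first exact: (subsetP (sBB' y)).
  rewrite !inE => /andP[zy /orP[zB|zI]].
    by apply: connect_erest_sub (sBB' y) (cBy r z rBy _); rewrite !inE zy zB.
  have yz : y != z by rewrite eq_sym.
  have [b bBy czb] := ear_connect vB xB pI uI zI yz.
  rewrite connect_erest_sym; apply: connect_trans czb _.
  exact: connect_erest_sub (sBB' y) (cBy b r bBy rBy).
Qed.

Lemma block_ear B v x I : is_block e B -> v \in B -> x \in B ->
  path e v (rcons I x) -> uniq (v :: rcons I x) -> {subset I <= B}.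
Proof.
case/andP=> nB /forallP maxB vB xB pI uI.
have := maxB (B :|: [set:: I]); rewrite (nonsep_ear nB vB xB pI uI) implybF.
by rewrite properE subsetUl negbK => /subsetP sub w wI; apply: sub; rewrite !inE wI orbT.
Qed.

Lemma block_path B v s : is_block e B -> v \in B ->
  path e v s -> uniq (v :: s) -> last v s \in B -> {subset s <= B}.
Proof.
case/lastP: s => [//|I x] bB vB pI uI; rewrite last_rcons => xB w.
by rewrite mem_rcons inE => /predU1P[->//|]; apply: (block_ear bB vB xB pI uI).
Qed.

Lemma noncut_block_neighbor B v w :
  ~~ cut_vertex e v -> is_block e B -> v \in B -> e v w -> w \in B.
Proof.
move=> ncut bB vB evw; have /andP[/nonsepP[B2 cB _] _] := bB.
have [u uB uv] : exists2 u, u \in B & u != v.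
  have /card_gt0P[u] : 0 < #|B :\ v| by move: (cardsD1 v B); lia.
  by rewrite !inE => /andP[uv uB]; exists u.
have wv : w != v by apply: contraTneq evw => ->; rewrite e_irr.
have cvw : connect (erest e [set: T]) v w by apply: connect1; rewrite /erest !inE evw.
have cvu := connect_erest_sub (subsetT B) (cB v u vB uB).
have /connectP[p pp uE] := noncut_connect ncut wv uv cvw cvu.
move: uE; case/shortenP: pp => q pq uq _ uE; have qTv := path_erest_sub pq.
have vq : v \notin q by apply/negP => /qTv; rewrite !inE eqxx.
apply: (@block_path B v (w :: q) bB vB); last exact: mem_head.
- by rewrite /= evw (sub_path _ pq) // => a b /and3P[].
- by rewrite /= inE negb_or eq_sym wv vq.
by rewrite /= -uE.
Qed.

Lemma block_cardD1 B v : is_block e B -> v \in B -> #|B :\ v| <= beta e - 1.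
Proof.
move=> bB vB; have : #|B| <= beta e := @leq_bigmax_cond _ _ (fun B => #|B|) B bB.
by rewrite (cardsD1 v B) vB; lia.
Qed.

Lemma card_neighbors_cut v : #|neighbors v| <= bc_degree e v * (beta e - 1).
Proof.
set Bv := [set B : {set T} | is_block e B & v \in B].
have sub : neighbors v \subset \bigcup_(B in Bv) (B :\ v).
  apply/subsetP => u; rewrite inE => evu.
  have [B bB sB] := nonsep_sub_block (nonsep_edge evu).
  have /andP[vB uB] : (v \in B) && (u \in B) by rewrite !(subsetP sB) // !inE eqxx ?orbT.
  apply/bigcupP; exists B; first by rewrite inE bB.
  by rewrite !inE uB andbT; apply: contraTneq evu => ->; rewrite e_irr.
apply: leq_trans (subset_leq_card sub) _; rewrite /bc_degree -/Bv -sum_nat_const.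
apply: leq_trans (card_bigcup_le _ _) _; apply: leq_sum => B.
by rewrite inE => /andP[]; apply: block_cardD1.
Qed.

Lemma card_neighbors_noncut v : ~~ cut_vertex e v -> #|neighbors v| <= beta e - 1.
Proof.
move=> ncut; have [u evu|iso] := pickP (e v); last first.
  have -> : neighbors v = set0 by apply/setP => u; rewrite !inE iso.
  by rewrite cards0.
have [B bB sB] := nonsep_sub_block (nonsep_edge evu).
have vB : v \in B by rewrite (subsetP sB) // !inE eqxx.
apply: leq_trans (block_cardD1 bB vB); apply/subset_leq_card/subsetP => w.
rewrite !inE => evw; rewrite (noncut_block_neighbor ncut bB vB evw) andbT.
by apply: contraTneq evw => ->; rewrite e_irr.
Qed.

Lemma Delta_tilde_gt0 : (exists v, cut_vertex e v) -> 0 < Delta_tilde e.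
Proof.
case=> v cutv; apply: leq_trans (@leq_bigmax_cond _ _ (bc_degree e) v cutv).
have [u evu] := cut_vertex_neighbor cutv.
have [B bB sB] := nonsep_sub_block (nonsep_edge evu).
by apply/card_gt0P; exists B; rewrite inE bB (subsetP sB) // !inE eqxx.
Qed.

Lemma card_neighbors_le v :
  (exists c, cut_vertex e c) -> #|neighbors v| <= (beta e - 1) * Delta_tilde e.
Proof.
move=> hcut; have [cutv|ncut] := boolP (cut_vertex e v).
  have := @leq_bigmax_cond _ _ (bc_degree e) v cutv; rewrite -/(Delta_tilde e) => leD.
  by apply: leq_trans (card_neighbors_cut v) _; rewrite mulnC leq_mul2l leD orbT.
exact: leq_trans (card_neighbors_noncut ncut) (leq_pmulr _ (Delta_tilde_gt0 hcut)).
Qed.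

Lemma grundy_coloring_neighbors k c : grundy_coloring e k c -> 0 < k -> k < #|T|.+1 ->
  exists v, k.-1 <= #|neighbors v|.
Proof.
case/and4P=> _ /forallP used _ /forallP grundy k_gt0 k_lt.
have := used (Ordinal k_lt); rewrite /= k_gt0 leqnn => /existsP[v /eqP cv].
exists v; pose f (j : 'I_k.-1) : 'I_#|T|.+1 := inord j.+1.
have fE j : nat_of_ord (f j) = j.+1 by rewrite inordK //; have := ltn_ord j; lia.
have f_inj : injective f by move=> i j /(congr1 (@nat_of_ord _)); rewrite !fE => -[/val_inj].
have sub : f @: [set: 'I_k.-1] \subset c @: neighbors v.
  apply/subsetP => _ /imsetP[j _ ->]; have := grundy v; move/forallP/(_ (f j)).
  rewrite fE cv /= (_ : j.+1 < k); last by have := ltn_ord j; lia.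
  by case/existsP=> u /andP[evu /eqP <-]; rewrite imset_f ?inE.
have := subset_leq_card sub; rewrite (card_imset _ f_inj) cardsT card_ord => le_k.
exact: leq_trans le_k (leq_imset_card _ _).
Qed.

End BlockDegrees.

Theorem corollary1 (T : finType) (e : rel T)
  (e_sym : symmetric e) (e_irr : irreflexive e)
  (hcut : exists v : T, cut_vertex e v) :
  grundy_number e <= (beta e - 1) * Delta_tilde e + 1.
Proof.
apply/bigmax_leqP => k /existsP[c grundy_c].
have [->|k_gt0] := posnP k; first by [].
have [v le_kv] := grundy_coloring_neighbors grundy_c k_gt0 (ltn_ord k).
have := card_neighbors_le e_sym e_irr v hcut; lia.
Qed.
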